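(* In the setting below: (i) For every $x\in M$ there is $y\in M$ with $y\neq x$ and $y\subseteq x$. (ii) If $x$ is a basic magma, then there is no partition of $x$ into finitely many (at least two) pairwise disjoint nonempty elements of $M$; i.e. there are no $n\geq2$ and pairwise disjoint $y_1,\dots,y_n\in M$ with $x=y_1\cup\dots\cup y_n$. (iii) Every element of $V(A)$ that is not in $M$ is either a set or an atom.
   Context: Work in ZFA (ZF with a set $A$ of atoms, i.e. urelements that have no elements), extended by a primitive binary relation $\preccurlyeq$ on $A$, with Separation and Replacement holding for formulas mentioning $\preccurlyeq$. $A$ is an infinite set of atoms and $\preccurlyeq$ is a pre-ordering (reflexive, transitive) on $A$ with no minimal elements: for every $a\in A$ there is $b\in A$ with $b\preccurlyeq a$ and not $a\preccurlyeq b$. For $a\in A$, $pr(a)=\{b\in A:b\preccurlyeq a\}$; $LO(A,\preccurlyeq)$ is the set of nonempty $x\subseteq A$ with $pr(a)\subseteq x$ for all $a\in x$. For a set $X$ of sets, $LO(X,\subseteq)$ is the set of nonempty $x\subseteq X$ such that for every $y\in x$ and every $z\in X$ with $z\subseteq y$, $z\in x$. The magmatic hierarchy: $M_1=LO(A,\preccurlyeq)$; $M_{\alpha+1}=LO(M_\alpha,\subseteq)$ for $\alpha\geq1$; $M_\alpha=\bigcup_{1\leq\beta<\alpha}M_\beta$ for limit $\alpha$; $M=\bigcup_{\alpha\geq1}M_\alpha$; elements of $M$ are called magmas. A basic magma is a set of the form $pr(a)$ for $a\in A$, or of the form $pr_\alpha(x)=\{y\in M_\alpha:y\subseteq x\}$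 for some ordinal $\alpha\geq1$ and $x\in M_\alpha$. $V(A)$ is the ZFA universe over $A$: $V_0(A)=A$, $V_{\alpha+1}(A)=V_\alpha(A)\cup\mathcal{P}(V_\alpha(A))$, unions at limits, $V(A)=\bigcup_\alpha V_\alpha(A)$. *)

(* A concrete model of the ZFA universe V(A):
   Aczel-style well-founded trees with atoms, with extensional equality
   [eqV] and membership [mem]. *)
From Stdlib Require Import List.

Set Implicit Arguments.

Section ZFA.
Variable Atom : Type.

Inductive V : Type :=
| atom : Atom -> V
| node : forall I : Type, (I -> V) -> V.

Fixpoint eqV (x y : V) {struct x} : Prop :=
  match x, y with
  | atom a, atom b => a = b
  | node f, node g =>
      (forall i, exists j, eqV (f i) (g j)) /\
      (forall j, exists i, eqV (f i) (g j))
  | _, _ => False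
  end.

Definition mem (z x : V) : Prop :=
  match x with
  | atom _ => False
  | node f => exists i, eqV z (f i)
  end.

Definition is_atom (x : V) : Prop := exists a, eqV x (atom a).
Definition is_set (x : V) : Prop := exists (I : Type) (f : I -> V), eqV x (node f).

Definition sub (x y : V) : Prop := forall z, mem z x -> mem z y.

Variable prec : Atom -> Atom -> Prop.

Definition in_pr (a : Atom) (z : V) : Prop := exists b, eqV z (atom b) /\ prec b a.

Definition LO_A (x : V) : Prop :=
  is_set x /\ (exists z, mem z x) /\
  (forall z, mem z x -> is_atom z) /\
  (forall a, mem (atom a) x -> forall z, in_pr a z -> mem z x).

Definition LO (X : V -> Prop) (x : V) : Prop :=
  is_set x /\ (exists z, mem z x) /\
  (forall z, mem z x -> X z) /\
  (forall y z, mem y x -> X z -> sub z y -> mem z x).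

(* Ordinals >= 1 are represented by well-ordered index types with a least
   element (the least element plays the role of the ordinal 1). *)
Record is_wellorder (T : Type) (lt : T -> T -> Prop) (t0 : T) : Prop := {
  wo_wf : well_founded lt;
  wo_trans : forall r s t, lt r s -> lt s t -> lt r t;
  wo_total : forall s t, lt s t \/ s = t \/ lt t s;
  wo_least : forall t, t = t0 \/ lt t0 t
}.

(* The magmatic hierarchy indexed by such a well-order:
   F t0 = M_1, F (succ s) = LO(F s, ⊆), F t = union of earlier F s at limits. *)
Definition is_magmatic (T : Type) (lt : T -> T -> Prop) (t0 : T)
  (F : T -> V -> Prop) : Prop :=
  (forall x, F t0 x <-> LO_A x) /\
  (forall s t, lt s t -> (forall u, ~ (lt s u /\ lt u t)) ->
     forall x, F t x <-> LO (F s) x) /\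
  (forall t, t <> t0 -> (forall s, lt s t -> exists u, lt s u /\ lt u t) ->
     forall x, F t x <-> exists s, lt s t /\ F s x).

Definition inM (x : V) : Prop :=
  exists (T : Type) (lt : T -> T -> Prop) (t0 : T) (F : T -> V -> Prop),
    is_wellorder lt t0 /\ is_magmatic lt t0 F /\ exists t, F t x.

Definition basic (x : V) : Prop :=
  (exists a, forall z, mem z x <-> in_pr a z) \/
  (exists (T : Type) (lt : T -> T -> Prop) (t0 : T) (F : T -> V -> Prop),
     is_wellorder lt t0 /\ is_magmatic lt t0 F /\
     exists t y, F t y /\ forall z, mem z x <-> (F t z /\ sub z y)).

End ZFA.

(* Every level M_α of the magmatic hierarchy consists of nonempty sets, and is
   either LO(A, ≼) or LO(M_β, ⊆) for an earlier β.  Hence a magma containing an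
   atom a contains pr(a), and a magma containing an element y of M_β contains
   every magma below y, because membership in M_β of a magma z ⊆ y does not
   depend on the hierarchy in which z was found (∈-induction on y).  So a basic
   magma lies inside every magma sharing its generator with it, which rules out
   a partition into disjoint nonempty magmas.  Proper submagmas come from an atom
   strictly below a given one at level 1 and from a proper submagma of an
   element at successor levels. *)
From Stdlib Require Import List Classical Lia.

Section Extensionality.
Context {Atom : Type}.
Implicit Types x y z w u v : V Atom.

Lemma eqV_refl x : eqV x x.
Proof.
  induction x as [a|I f IH]; simpl; auto.
  split; intro i; exists i; auto.
Qed.

Lemma eqV_sym {x y} : eqV x y -> eqV y x.
Proof.
  revert y; induction x as [a|I f IH]; intros [b|J g]; simpl; try tauto.
  - intros; subst; reflexivity.
  - intros [Hfg Hgf]; split.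
    + intro j; destruct (Hgf j) as [i Hi]; exists i; apply IH, Hi.
    + intro i; destruct (Hfg i) as [j Hj]; exists j; apply IH, Hj.
Qed.

Lemma eqV_trans {x y z} : eqV x y -> eqV y z -> eqV x z.
Proof.
  revert y z; induction x as [a|I f IH]; intros [b|J g] [c|K h]; simpl; try tauto.
  - congruence.
  - intros [Hfg Hgf] [Hgh Hhg]; split.
    + intro i; destruct (Hfg i) as [j Hj]; destruct (Hgh j) as [k Hk]; eauto.
    + intro k; destruct (Hhg k) as [j Hj]; destruct (Hgf j) as [i Hi]; eauto.
Qed.

Lemma mem_eqV_r {x x' z} : eqV x x' -> mem z x -> mem z x'.
Proof.
  destruct x as [a|I f]; destruct x' as [b|J g]; simpl; try tauto.
  intros [Hfg _] [i Hi]; destruct (Hfg i) as [j Hj].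
  exists j; eapply eqV_trans; eauto.
Qed.

Lemma mem_eqV_l {x z z'} : eqV z z' -> mem z x -> mem z' x.
Proof.
  destruct x as [a|I f]; simpl; auto.
  intros E [i Hi]; exists i; eapply eqV_trans; [apply eqV_sym|]; eauto.
Qed.

Lemma is_set_eqV {x x'} : eqV x x' -> is_set x -> is_set x'.
Proof.
  intros E [I [f Hf]]; exists I, f.
  eapply eqV_trans; [apply eqV_sym|]; eauto.
Qed.

Lemma is_set_node {x} : is_set x -> exists I (f : I -> V Atom), x = node f.
Proof. destruct x as [a|I f]; [intros [J [g []]]|eauto]. Qed.

Lemma atom_not_set {w} : is_atom w -> ~ is_set w.
Proof.
  intros [a Ha] Hw.
  destruct (is_set_eqV Ha Hw) as [I [f []]].
Qed.

Lemma eqV_ext {x y} : is_set x -> is_set y -> sub x y -> sub y x -> eqV x y.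
Proof.
  intros Hx Hy Hxy Hyx.
  destruct (is_set_node Hx) as [I [f ->]]; destruct (is_set_node Hy) as [J [g ->]].
  split.
  - intro i; destruct (Hxy (f i)) as [j Hj]; [exists i; apply eqV_refl|eauto].
  - intro j; destruct (Hyx (g j)) as [i Hi]; [exists j; apply eqV_refl|].
    exists i; apply eqV_sym, Hi.
Qed.

(* Separation is only defined on a set presented as [node f]: indexing by
   elements of [V Atom] itself would be a universe inconsistency. *)
Definition sep {I : Type} (f : I -> V Atom) (P : V Atom -> Prop) : V Atom :=
  node (fun j : {i : I | P (f i)} => f (proj1_sig j)).

Lemma is_set_sep {I : Type} (f : I -> V Atom) P : is_set (sep f P).
Proof. eexists _, _; apply eqV_refl. Qed.

Lemma mem_sep {I : Type} (f : I -> V Atom) (P : V Atom -> Prop) z :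
  (forall u v, eqV u v -> P u -> P v) ->
  mem z (sep f P) <-> mem z (node f) /\ P z.
Proof.
  intro HP; split.
  - intros [[i Pi] Hz]; split; [exists i; exact Hz|].
    apply (HP (f i)); [apply eqV_sym|]; assumption.
  - intros [[i Hz] Pz]; exists (exist _ i (HP z (f i) Hz Pz)); exact Hz.
Qed.

Lemma LO_A_eqV {prec x x'} : eqV x x' -> LO_A prec x -> LO_A prec x'.
Proof.
  intros E [Hs [[z Hz] [Hat Hcl]]]; pose proof (eqV_sym E) as E'.
  split; [exact (is_set_eqV E Hs)|split; [exists z; exact (mem_eqV_r E Hz)|split]].
  - intros w Hw; apply Hat, (mem_eqV_r E' Hw).
  - intros a Ha w Hw; apply (mem_eqV_r E), (Hcl a (mem_eqV_r E' Ha) w Hw).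
Qed.

Lemma LO_eqV {X : V Atom -> Prop} {x x'} : eqV x x' -> LO X x -> LO X x'.
Proof.
  intros E [Hs [[z Hz] [HX Hcl]]]; pose proof (eqV_sym E) as E'.
  split; [exact (is_set_eqV E Hs)|split; [exists z; exact (mem_eqV_r E Hz)|split]].
  - intros w Hw; apply HX, (mem_eqV_r E' Hw).
  - intros y w Hy Hw Hwy; apply (mem_eqV_r E), (Hcl y w (mem_eqV_r E' Hy) Hw Hwy).
Qed.

End Extensionality.

Section ProperSubsets.
Context {Atom : Type}.
Implicit Types x y z w u : V Atom.

Lemma in_pr_atom (prec : Atom -> Atom -> Prop) a b : in_pr prec a (atom b) <-> prec b a.
Proof.
  split.
  - intros [c [E Hc]]; simpl in E; subst; exact Hc.
  - intro Hba; exists b; split; [apply eqV_refl|exact Hba].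
Qed.

Lemma in_pr_eqV {prec a u v} : eqV u v -> in_pr prec a u -> in_pr prec a v.
Proof.
  intros E [b [Hb Hba]]; exists b; split; [eapply eqV_trans; [apply eqV_sym|]|]; eauto.
Qed.

Lemma sub_eqV_l {y u v} : eqV u v -> sub u y -> sub v y.
Proof. intros E Huy z Hz; apply Huy, (mem_eqV_r (eqV_sym E) Hz). Qed.

(* The witness is x ∩ pr(b) for an atom b strictly below an atom of x. *)
Lemma LO_A_proper_sub {prec : Atom -> Atom -> Prop} {x} :
  (forall a, prec a a) -> (forall a b c, prec a b -> prec b c -> prec a c) ->
  (forall a, exists b, prec b a /\ ~ prec a b) ->
  LO_A prec x -> exists y, LO_A prec y /\ ~ eqV y x /\ sub y x.
Proof.
  intros prec_refl prec_trans no_minimal [Hxs [[z Hz] [Hat Hcl]]].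
  destruct (is_set_node Hxs) as [I [f ->]].
  destruct (Hat z Hz) as [a Ha]; apply (mem_eqV_l Ha) in Hz.
  destruct (no_minimal a) as [b [Hba Hab]].
  assert (Hin : forall w, mem w (sep f (in_pr prec b)) <-> mem w (node f) /\ in_pr prec b w)
    by (intro w; apply mem_sep; intros u v; apply in_pr_eqV).
  exists (sep f (in_pr prec b)); split; [|split].
  - split; [apply is_set_sep|split; [|split]].
    + exists (atom b); apply Hin; split; [|apply in_pr_atom, prec_refl].
      apply (Hcl a Hz), in_pr_atom, Hba.
    + intros w Hw; apply Hat, Hin, Hw.
    + intros c Hc w [d [Hwd Hdc]]; apply Hin in Hc as [Hc Hcb]; apply in_pr_atom in Hcb.
      apply Hin; split; [apply (Hcl c Hc); exists d; auto|].
      exists d; split; [exact Hwd|eauto].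
  - intro E; apply Hab, in_pr_atom, Hin, (mem_eqV_r (eqV_sym E) Hz).
  - intros w Hw; apply Hin, Hw.
Qed.

(* The witness is {u ∈ x : u ⊆ y'} for a proper subset y' ∈ X of some y ∈ x. *)
Lemma LO_proper_sub {X : V Atom -> Prop} {x} :
  (forall y, X y -> is_set y) ->
  (forall y, X y -> exists y', X y' /\ ~ eqV y' y /\ sub y' y) ->
  LO X x -> exists x', LO X x' /\ ~ eqV x' x /\ sub x' x.
Proof.
  intros Xset Xproper [Hxs [[y Hy] [HX Hcl]]].
  destruct (is_set_node Hxs) as [I [f ->]].
  destruct (Xproper y (HX y Hy)) as [y' [Hy' [Hne Hy'y]]].
  assert (Hin : forall w, mem w (sep f (fun u => sub u y')) <-> mem w (node f) /\ sub w y')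
    by (intro w; apply (mem_sep f (fun u => sub u y')); intros u v E; exact (sub_eqV_l E)).
  exists (sep f (fun u => sub u y')); split; [|split].
  - split; [apply is_set_sep|split; [|split]].
    + exists y'; apply Hin; split; [apply (Hcl y y' Hy Hy' Hy'y)|intros r Hr; exact Hr].
    + intros w Hw; apply HX, Hin, Hw.
    + intros w u Hw Hu Huw; apply Hin in Hw as [Hw Hwy'].
      apply Hin; split; [apply (Hcl w u Hw Hu Huw)|intros r Hr; apply Hwy', Huw, Hr].
  - intro E; apply Hne, eqV_ext; [apply Xset, Hy'|apply Xset, HX, Hy|exact Hy'y|].
    apply Hin, (mem_eqV_r (eqV_sym E) Hy).
  - intros w Hw; apply Hin, Hw.
Qed.

End ProperSubsets.

Definition covers {T : Type} (lt : T -> T -> Prop) (s t : T) : Prop :=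
  lt s t /\ forall u, ~ (lt s u /\ lt u t).

Definition limit_point {T : Type} (lt : T -> T -> Prop) (t0 t : T) : Prop :=
  t <> t0 /\ forall s, lt s t -> exists u, lt s u /\ lt u t.

Lemma base_succ_or_limit {T : Type} (lt : T -> T -> Prop) (t0 t : T) :
  t = t0 \/ (exists s, covers lt s t) \/ limit_point lt t0 t.
Proof.
  destruct (classic (t = t0)) as [Ht|Ht]; [left; exact Ht|right].
  destruct (classic (exists s, covers lt s t)) as [Hs|Hs]; [left; exact Hs|right].
  split; [exact Ht|intros s Hst].
  apply NNPP; intro Hu; apply Hs; exists s; split; [exact Hst|].
  intros u Hsu; apply Hu; exists u; exact Hsu.
Qed.

Section Hierarchy.
Context {Atom : Type} {prec : Atom -> Atom -> Prop}.
Context {T : Type} {lt : T -> T -> Prop} {t0 : T} {F : T -> V Atom -> Prop}.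
Hypothesis HW : is_wellorder lt t0.
Hypothesis HM : is_magmatic prec lt t0 F.

Lemma level_base x : F t0 x <-> LO_A prec x.
Proof. apply (proj1 HM). Qed.

Lemma level_succ {s t} : covers lt s t -> forall x, F t x <-> LO (F s) x.
Proof. intros [Hst Hcov]; apply (proj1 (proj2 HM) s t Hst Hcov). Qed.

Lemma level_limit {t} : limit_point lt t0 t -> forall x, F t x <-> exists s, lt s t /\ F s x.
Proof. intros [Ht Hlim]; apply (proj2 (proj2 HM) t Ht Hlim). Qed.

Lemma level_set_nonempty {t x} : F t x -> is_set x /\ exists z, mem z x.
Proof.
  revert x; induction t as [t IH] using (well_founded_ind (wo_wf HW)).
  destruct (base_succ_or_limit lt t0 t) as [->|[[s Hst]|Hlim]]; intros x Hx.
  - apply level_base in Hx as [Hset [Hne _]]; auto.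
  - apply (level_succ Hst) in Hx as [Hset [Hne _]]; auto.
  - apply (level_limit Hlim) in Hx as [s [Hs Hx]]; eauto.
Qed.

Lemma level_eqV {t x x'} : eqV x x' -> F t x -> F t x'.
Proof.
  revert x x'; induction t as [t IH] using (well_founded_ind (wo_wf HW)).
  destruct (base_succ_or_limit lt t0 t) as [->|[[s Hst]|Hlim]]; intros x x' E Hx.
  - apply level_base, (LO_A_eqV E), level_base, Hx.
  - apply (level_succ Hst), (LO_eqV E), (level_succ Hst), Hx.
  - apply (level_limit Hlim) in Hx as [s [Hs Hx]].
    apply (level_limit Hlim); exists s; split; [exact Hs|exact (IH s Hs x x' E Hx)].
Qed.

Lemma level_LO_cases {t x} : F t x -> LO_A prec x \/ exists s, LO (F s) x.
Proof.
  revert x; induction t as [t IH] using (well_founded_ind (wo_wf HW)).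
  destruct (base_succ_or_limit lt t0 t) as [->|[[s Hst]|Hlim]]; intros x Hx.
  - left; apply level_base, Hx.
  - right; exists s; apply (level_succ Hst), Hx.
  - apply (level_limit Hlim) in Hx as [s [Hs Hx]]; exact (IH s Hs x Hx).
Qed.

Lemma level_mem_atom_LO_A {t x w} : F t x -> mem w x -> is_atom w -> LO_A prec x.
Proof.
  intros Hx Hw Hwa; destruct (level_LO_cases Hx) as [HA|[s [_ [_ [HX _]]]]]; [exact HA|].
  destruct (atom_not_set Hwa); apply (level_set_nonempty (HX w Hw)).
Qed.

Lemma level_mem_set_LO {t x w} : F t x -> mem w x -> is_set w -> exists s, LO (F s) x.
Proof.
  intros Hx Hw Hws; destruct (level_LO_cases Hx) as [[_ [_ [Hat _]]]|HL]; [|exact HL].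
  destruct (atom_not_set (Hat w Hw) Hws).
Qed.

Lemma level_proper_sub {t x} :
  (forall a, prec a a) -> (forall a b c, prec a b -> prec b c -> prec a c) ->
  (forall a, exists b, prec b a /\ ~ prec a b) ->
  F t x -> exists y, F t y /\ ~ eqV y x /\ sub y x.
Proof.
  intros prec_refl prec_trans no_minimal.
  revert x; induction t as [t IH] using (well_founded_ind (wo_wf HW)).
  destruct (base_succ_or_limit lt t0 t) as [->|[[s Hst]|Hlim]]; intros x Hx.
  - apply level_base in Hx.
    destruct (LO_A_proper_sub prec_refl prec_trans no_minimal Hx) as [y [Hy Hyx]].
    exists y; split; [apply level_base, Hy|exact Hyx].
  - apply (level_succ Hst) in Hx.
    destruct (LO_proper_sub (fun y Hy => proj1 (level_set_nonempty Hy)) (IH s (proj1 Hst)) Hx)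
      as [y [Hy Hyx]].
    exists y; split; [apply (level_succ Hst), Hy|exact Hyx].
  - apply (level_limit Hlim) in Hx as [s [Hs Hx]].
    destruct (IH s Hs x Hx) as [y [Hy Hyx]].
    exists y; split; [apply (level_limit Hlim); eauto|exact Hyx].
Qed.

End Hierarchy.

(* The two hierarchies swap roles in the induction hypothesis, which is why
   both are universally quantified after [y]. *)
Lemma level_sub_closed {Atom : Type} {prec : Atom -> Atom -> Prop} {y : V Atom} :
  forall {T : Type} {lt : T -> T -> Prop} {t0 : T} {F : T -> V Atom -> Prop},
  is_wellorder lt t0 -> is_magmatic prec lt t0 F -> forall {t}, F t y ->
  forall {T' : Type} {lt' : T' -> T' -> Prop} {t0' : T'} {F' : T' -> V Atom -> Prop},
  is_wellorder lt' t0' -> is_magmatic prec lt' t0' F' ->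
  forall {t' z}, F' t' z -> sub z y -> F t z.
Proof.
  induction y as [a|I f IHf].
  { intros T lt t0 F HW HM t Hy.
    destruct (level_set_nonempty HW HM Hy) as [[J [g []]] _]. }
  intros T lt t0 F HW HM t.
  induction t as [t IHt] using (well_founded_ind (wo_wf HW)).
  destruct (base_succ_or_limit lt t0 t) as [->|[[s Hst]|Hlim]];
    intros Hy T' lt' t0' F' HW' HM' t' z Hz Hzy;
    destruct (level_set_nonempty HW' HM' Hz) as [_ [w Hw]].
  - apply (level_base HM) in Hy as [_ [_ [Hat _]]]; apply (level_base HM).
    exact (level_mem_atom_LO_A HW' HM' Hz Hw (Hat w (Hzy w Hw))).
  - apply (level_succ HM Hst) in Hy as [_ [_ [HyF _]]]; apply (level_succ HM Hst).
    destruct (level_mem_set_LO HW' HM' Hz Hw) as [s' [Hzs [Hzne [HzF' Hzcl]]]].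
    { exact (proj1 (level_set_nonempty HW HM (HyF w (Hzy w Hw)))). }
    split; [exact Hzs|split; [exact Hzne|split]].
    + intros u Hu; apply HyF, Hzy, Hu.
    + intros v u Hv Hu Huv; apply (Hzcl v u Hv); [|exact Huv].
      destruct (Hzy v Hv) as [i Hvi].
      apply (IHf i T' lt' t0' F' HW' HM' s' (level_eqV HW' HM' Hvi (HzF' v Hv))
               T lt t0 F HW HM s u Hu).
      intros r Hr; apply (mem_eqV_r Hvi), Huv, Hr.
  - apply (level_limit HM Hlim) in Hy as [s [Hs Hy]]; apply (level_limit HM Hlim).
    exists s; split; [exact Hs|exact (IHt s Hs Hy T' lt' t0' F' HW' HM' t' z Hz Hzy)].
Qed.

Section Magmas.
Context {Atom : Type} {prec : Atom -> Atom -> Prop}.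

Lemma inM_nonempty {y : V Atom} : inM prec y -> exists z, mem z y.
Proof.
  intros [T [lt [t0 [F [HW [HM [t Ht]]]]]]]; exact (proj2 (level_set_nonempty HW HM Ht)).
Qed.

Lemma inM_proper_sub {x : V Atom} :
  (forall a, prec a a) -> (forall a b c, prec a b -> prec b c -> prec a c) ->
  (forall a, exists b, prec b a /\ ~ prec a b) ->
  inM prec x -> exists y, inM prec y /\ ~ eqV y x /\ sub y x.
Proof.
  intros prec_refl prec_trans no_minimal [T [lt [t0 [F [HW [HM [t Ht]]]]]]].
  destruct (level_proper_sub HW HM prec_refl prec_trans no_minimal Ht) as [y [Hy Hyx]].
  exists y; split; [exists T, lt, t0, F; eauto|exact Hyx].
Qed.

(* The generator is [atom a] for pr(a) and [y] for pr_α(y). *)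
Lemma basic_generator {x : V Atom} :
  (forall a, prec a a) -> basic prec x ->
  exists g, mem g x /\ forall y, inM prec y -> mem g y -> sub x y.
Proof.
  intros prec_refl [[a Ha]|[T [lt [t0 [F [HW [HM [t [y0 [Hy0 Hx]]]]]]]]]].
  - exists (atom a); split; [apply Ha, in_pr_atom, prec_refl|].
    intros y [T [lt [t0 [F [HW [HM [t Hy]]]]]]] Hay z Hz.
    destruct (level_mem_atom_LO_A HW HM Hy Hay) as [_ [_ [_ Hcl]]];
      [exists a; apply eqV_refl|].
    exact (Hcl a Hay z (proj1 (Ha z) Hz)).
  - exists y0; split; [apply Hx; split; [exact Hy0|intros r Hr; exact Hr]|].
    intros y [T' [lt' [t0' [F' [HW' [HM' [t' Hy]]]]]]] Hy0y z Hz.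
    apply Hx in Hz as [Hz Hzy0].
    destruct (level_mem_set_LO HW' HM' Hy Hy0y) as [s [_ [_ [HyF Hcl]]]];
      [exact (proj1 (level_set_nonempty HW HM Hy0))|].
    exact (Hcl y0 z Hy0y (level_sub_closed HW' HM' (HyF y0 Hy0y) HW HM Hz Hzy0) Hzy0).
Qed.

End Magmas.

Theorem proposition4p14 (Atom : Type) (prec : Atom -> Atom -> Prop)
  (A_infinite : ~ exists l : list Atom, forall a, In a l)
  (prec_refl : forall a, prec a a)
  (prec_trans : forall a b c, prec a b -> prec b c -> prec a c)
  (no_minimal : forall a, exists b, prec b a /\ ~ prec a b) :
  (* (i) *)
  (forall x : V Atom, inM prec x ->
     exists y, inM prec y /\ ~ eqV y x /\ sub y x) /\
  (* (ii) *)
  (forall x : V Atom, basic prec x ->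
     ~ exists (n : nat) (y : nat -> V Atom),
         2 <= n /\
         (forall i, i < n -> inM prec (y i)) /\
         (forall i j, i < n -> j < n -> i <> j ->
            forall z, ~ (mem z (y i) /\ mem z (y j))) /\
         (forall z, mem z x <-> exists i, i < n /\ mem z (y i))) /\
  (* (iii) *)
  (forall x : V Atom, ~ inM prec x -> is_set x \/ is_atom x).
Proof.
  split; [|split].
  - intros x; exact (inM_proper_sub prec_refl prec_trans no_minimal).
  - intros x Hb [n [y [Hn [HyM [Hdis Hx]]]]].
    destruct (basic_generator prec_refl Hb) as [g [Hg Hgen]].
    destruct (proj1 (Hx g) Hg) as [i [Hi Hgi]].
    pose (j := if PeanoNat.Nat.eq_dec i 0 then 1 else 0).
    assert (Hj : j < n /\ i <> j) by (unfold j; destruct PeanoNat.Nat.eq_dec; lia).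
    destruct (inM_nonempty (HyM j (proj1 Hj))) as [w Hw].
    apply (Hdis i j Hi (proj1 Hj) (proj2 Hj) w); split; [|exact Hw].
    apply (Hgen (y i) (HyM i Hi) Hgi), Hx; exists j; split; [apply Hj|exact Hw].
  - intros [a|I f] _; [right; exists a|left; exists I, f]; apply eqV_refl.
Qed.
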